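(* Let $n$ be large, let $k$ be an integer with $1\le k\le 0.5\log n$, let $d=2\log 2n$, $\xi=e^{1/3}\cdot 2\log 2n$, and $\alpha_i=\prod_{j=1}^{i}\bigl(1+\tfrac{1}{k-j}\bigr)$ for $0\le i\le k-1$ (so $\alpha_0=1$). Consider the clustering sequence described in the context. For every $1\le i\le k-1$, if $|\mathcal{C}_{i-1}|\le \xi\,\alpha_{i-1}\,n^{1-(i-1)/k}$, then $\Pr\bigl[|\mathcal{C}_i|\ge \xi\,\alpha_i\,n^{1-i/k}\bigr]<0.5$. Moreover, $\xi\,\alpha_{k-1}\,n^{1/k}=O(k n^{1/k}\log n)$.
   Context: Logarithms are base 2. There is a graph on $n$ nodes and a sequence of clusterings $\mathcal{C}_0,\mathcal{C}_1,\dots$, where each clustering is a set of disjoint sets (clusters) of nodes, $\mathcal{C}_0=\{\{v\}: v\in V\}$, and for $1\le i\le k-1$ the clustering $\mathcal{C}_i$ is obtained from $\mathcal{C}_{i-1}$ by including each cluster $C\in\mathcal{C}_{i-1}$ in $\mathcal{C}_i$ with probability $n^{-1/k}$, where the inclusion events of the clusters of $\mathcal{C}_{i-1}$ are $d$-wise independent (any $d$ of them are mutually independent), conditioned on $\mathcal{C}_{i-1}$. *)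

From HB Require Import structures.
From mathcomp Require Import all_boot all_order all_algebra.
From mathcomp Require Import all_classical all_reals all_analysis.
Set Implicit Arguments. Unset Strict Implicit. Unset Printing Implicit Defensive.
Import Order.TTheory GRing.Theory Num.Theory.
Local Open Scope ring_scope.
Local Open Scope classical_set_scope.

Definition log2 {R : realType} (x : R) : R := ln x / ln 2.

Definition dpar {R : realType} (n : nat) : R := 2 * log2 (2 * n%:R).

Definition xi {R : realType} (n : nat) : R := expR (3^-1) * (2 * log2 (2 * n%:R)).

Definition alpha {R : realType} (k i : nat) : R :=
  \prod_(1 <= j < i.+1) (1 + ((k - j)%:R)^-1).

Definition bound {R : realType} (n k i : nat) : R :=
  xi n * alpha k i * (n%:R `^ (1 - i%:R / k%:R)).

Definition clustering (n : nat) (C : {set {set 'I_n}}) : Prop :=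
  forall A B, A \in C -> B \in C -> A != B -> (A :&: B == finset.set0).

Definition dwise_indep {R : realType} {dT : measure_display} {T : measurableType dT}
  (P : probability T R) (n : nat) (C : {set {set 'I_n}}) (E : {set 'I_n} -> set T)
  (d : R) : Prop :=
  forall S : {set {set 'I_n}}, S \subset C -> (#|S|%:R <= d) ->
    P [set x | forall A, A \in S -> x \in E A] = (\prod_(A in S) fine (P (E A)))%:E.

Definition next_clustering {T : Type} (n : nat) (C : {set {set 'I_n}})
  (E : {set 'I_n} -> set T) (x : T) : {set {set 'I_n}} :=
  [set A in C | x \in E A].

From HB Require Import structures.
From mathcomp Require Import all_boot all_order all_algebra.
From mathcomp Require Import all_classical all_reals all_analysis.
From mathcomp Require Import measurable_realfun ring lra zify.
Set Implicit Arguments. Unset Strict Implicit. Unset Printing Implicit Defensive.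
Import Order.TTheory GRing.Theory Num.Theory.
Local Open Scope ring_scope.
Local Open Scope classical_set_scope.

(* Let X = |C_i|, p = n^(-1/k) and t = 2k + 1 <= d.  The binomial 'C(X, t)
   counts the t-sets of clusters of C_(i-1) that all survive, so by t-wise
   independence its mean is 'C(|C_(i-1)|, t) p^t, while on the event X >= b it
   is at least prod_(j<t) (b - j) / t!.  Markov's inequality thus bounds
   P[X >= b] by prod_(j<t) (|C_(i-1)| - j) p / (b - j).  Writing the threshold
   as b = mu (1 + delta) with mu = xi alpha_(i-1) n^(1-i/k) and
   delta = 1/(k-i), the size of xi gives mu delta >= 2t, so each factor is at
   most 1/(1 + delta/2), and (1 + delta/2)^t >= 1 + t delta/2 > 2 because
   t > 2(k - i).  The asymptotic claim reduces to alpha_(k-1) = k. *)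

Lemma ler_bernoulli (R : realFieldType) (x : R) (t : nat) :
  0 <= x -> 1 + t%:R * x <= (1 + x) ^+ t.
Proof.
move=> x_ge0; elim: t => [|t IH]; first by rewrite mul0r addr0 expr0.
rewrite exprS -natr1; apply: le_trans (ler_wpM2l _ IH); last exact: addr_ge0.
have : 0 <= t%:R * x * x by rewrite !mulr_ge0.
nra.
Qed.

Lemma prod_subr_le_ffact (R : realDomainType) (X t : nat) (y : R) :
  t%:R <= y -> y <= X%:R -> \prod_(j < t) (y - j%:R) <= (X ^_ t)%:R.
Proof.
move=> ty yX; rewrite ffact_prod natr_prod; apply: ler_prod => j _.
have jy : j%:R <= y by apply: le_trans ty; rewrite ler_nat ltnW.
have jX : (j <= X)%N by rewrite -(ler_nat R) (le_trans jy).
by rewrite subr_ge0 jy natrB // lerB.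
Qed.

Lemma markov_indic_sum d (T : measurableType d) (R : realType)
    (mu : {measure set T -> \bar R}) (I : finType) (J : {set I})
    (F : I -> set T) (G : set T) (c : R) :
  (forall i, i \in J -> measurable (F i)) -> measurable G -> 0 <= c ->
  (forall x, G x -> c <= \sum_(i in J) \1_(F i) x) ->
  (c%:E * mu G <= \sum_(i in J) mu (F i))%E.
Proof.
move=> mF mG c_ge0 cG.
pose FJ i := if i \in J then F i else set0.
have mFJ i : measurable (FJ i) by rewrite /FJ; case: ifPn => // /mF.
have indicFJ x : \sum_(i in J) \1_(F i) x = \sum_i \1_(FJ i) x :> R.
  rewrite big_mkcond /=; apply: eq_bigr => i _; rewrite /FJ.
  by case: ifPn => // _; rewrite indicE in_set0.
have -> : (\sum_(i in J) mu (F i) = \sum_i \int[mu]_x (\1_(FJ i) x)%:E)%E.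
  rewrite big_mkcond /=; apply: eq_bigr => i _.
  by rewrite integral_indic // setIT /FJ; case: ifPn; rewrite ?measure0.
rewrite -ge0_integral_sum //; last first.
  by move=> i; apply/measurable_EFinP; exact: measurable_indic.
rewrite -{1}(setIT G) -integral_indic // -ge0_integralZl_EFin //; last first.
  by apply/measurable_EFinP; exact: measurable_indic.
apply: ge0_le_integral => //.
- by move=> x _; rewrite -EFinM lee_fin mulr_ge0 // indic_ge0.
- by apply/measurable_EFinP; apply: measurable_funM => //; exact: measurable_indic.
- by apply: emeasurable_sum => i; apply/measurable_EFinP; exact: measurable_indic.
move=> x _; rewrite -EFinM sumEFin lee_fin -indicFJ indicE.
have [xG|xNG] := boolP (x \in G).
  by rewrite mulr1; apply: cG; rewrite -in_setE.
by rewrite mulr0 sumr_ge0 // => i _; rewrite indic_ge0.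
Qed.

Lemma ffact_geometric_le (R : realFieldType) (m t : nat) (p mu delta : R) :
  0 <= p -> 0 <= delta -> m%:R * p <= mu -> 2 * t%:R <= mu * delta ->
  (m ^_ t)%:R * p ^+ t * (1 + delta / 2) ^+ t
    <= \prod_(j < t) (mu * (1 + delta) - j%:R).
Proof.
move=> p_ge0 delta_ge0 mp_mu t_mudelta.
rewrite ffact_prod natr_prod -[in p ^+ t](card_ord t) -[in (1 + _) ^+ t](card_ord t).
rewrite -!prodr_const -!big_split /=; apply: ler_prod => j _.
have q_ge0 : 0 <= 1 + delta / 2 by rewrite addr_ge0 ?divr_ge0.
rewrite !mulr_ge0 //=.
have mjp_mu : (m - j)%:R * p <= mu.
  by apply: le_trans mp_mu; rewrite ler_wpM2r // ler_nat leq_subr.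
have jt : j%:R <= t%:R :> R by rewrite ler_nat ltnW.
have : 0 <= (mu - (m - j)%:R * p) * delta by rewrite mulr_ge0 // subr_ge0.
(* (m - j) p (1 + delta/2) <= mu + mu delta/2 <= mu (1 + delta) - j,
   as j <= t <= mu delta/2. *)
nra.
Qed.

Section bounded_independence_tail.
Variables (R : realType) (dT : measure_display) (T : measurableType dT).
Variables (P : probability T R) (n : nat) (C : {set {set 'I_n}}).
Variables (E : {set 'I_n} -> set T) (p d : R).
Hypothesis mE : forall A, A \in C -> measurable (E A).
Hypothesis PE : forall A, A \in C -> P (E A) = p%:E.
Hypothesis indepE : dwise_indep P C E d.

Let occur (S : {set {set 'I_n}}) : set T := [set x | forall A, A \in S -> x \in E A].

Let draws (t : nat) := [set S : {set {set 'I_n}} | S \subset C & #|S| == t]%SET.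

Let in_occur (S : {set {set 'I_n}}) (x : T) :
  S \subset C -> (x \in occur S) = (S \subset next_clustering C E x).
Proof.
move=> /fintype.subsetP SC; apply/idP/fintype.subsetP; rewrite in_setE /occur /=.
  by move=> Sx A AS; rewrite inE SC //= Sx.
by move=> Sx A /Sx; rewrite [_ \in next_clustering _ _ _]inE => /andP[].
Qed.

Let measurable_occur (S : {set {set 'I_n}}) : S \subset C -> measurable (occur S).
Proof.
move=> /fintype.subsetP SC.
have -> : occur S = \bigcap_(A in [set A | A \in S]) E A.
  apply/seteqP; split => x /= Sx A AS.
    by rewrite -in_setE; exact: Sx.
  by rewrite in_setE; exact: Sx.
by apply: fin_bigcap_measurable; [exact: finite_finset|move=> A /SC/mE].
Qed.

Let next_clustering_sub (x : T) : next_clustering C E x \subset C.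
Proof. by apply/fintype.subsetP => A; rewrite inE => /andP[]. Qed.

Let measurable_next_clustering_ge (b : R) :
  measurable [set x | b <= #|next_clustering C E x|%:R].
Proof.
have -> : [set x | b <= #|next_clustering C E x|%:R] =
    \bigcup_(D in [set D : {set {set 'I_n}} | D \subset C /\ b <= #|D|%:R]) occur D.
  apply/seteqP; split => x /=.
    move=> bx; exists (next_clustering C E x) => //.
    by rewrite -in_setE in_occur.
  move=> [D [DC bD]]; rewrite -in_setE in_occur // => Dx.
  by apply: le_trans bD _; rewrite ler_nat subset_leq_card.
apply: fin_bigcup_measurable; first exact: finite_finset.
by move=> D [DC _]; exact: measurable_occur.
Qed.

Let sum_indic_occur (t : nat) (x : T) :
  \sum_(S in draws t) \1_(occur S) x = 'C(#|next_clustering C E x|, t)%:R :> R.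
Proof.
rewrite -cards_draws -sum1_card natr_sum big_mkcond [RHS]big_mkcond /=.
apply: eq_bigr => S _; rewrite !inE indicE.
have [SC|SNC] /= := boolP (S \subset C).
  by rewrite in_occur //; case: (S \subset _); case: (_ == _).
suff -> : (S \subset next_clustering C E x) = false by [].
by apply: contraNF SNC => /fintype.subset_trans; apply; exact: next_clustering_sub.
Qed.

Let sum_measure_occur (t : nat) : t%:R <= d ->
  (\sum_(S in draws t) P (occur S) = ('C(#|C|, t)%:R * p ^+ t)%:E)%E.
Proof.
move=> td; rewrite (eq_bigr (fun _ => (p ^+ t)%:E)); last first.
  move=> S; rewrite inE => /andP[/fintype.subsetP SC /eqP St].
  rewrite /occur indepE ?St //; last exact/fintype.subsetP.
  rewrite -St -prodr_const; congr EFin; apply: eq_bigr => A AS.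
  by rewrite PE ?SC.
by rewrite sumEFin sumr_const cards_draws mulr_natl.
Qed.

Lemma next_clustering_ge_ffact {t : nat} {b : R} : t%:R <= d -> t%:R <= b ->
  ((\prod_(j < t) (b - j%:R))%:E * P [set x | (b <= #|next_clustering C E x|%:R)%R]
    <= ((#|C| ^_ t)%:R * p ^+ t)%:E)%E.
Proof.
move=> td tb.
have tf_gt0 : (0 : R) < t`!%:R by rewrite ltr0n fact_gt0.
set Pi := \prod_(j < t) _.
have Pi_ge0 : 0 <= Pi.
  by apply: prodr_ge0 => j _; rewrite subr_ge0 (le_trans _ tb) // ler_nat ltnW.
have mG := measurable_next_clustering_ge b.
have m_occur S : S \in draws t -> measurable (occur S).
  by rewrite inE => /andP[SC _]; exact: measurable_occur.
have count x : b <= #|next_clustering C E x|%:R ->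
    Pi / t`!%:R <= \sum_(S in draws t) \1_(occur S) x.
  move=> bx; rewrite sum_indic_occur ler_pdivrMr // -natrM bin_ffact.
  exact: prod_subr_le_ffact.
have := markov_indic_sum P m_occur mG (divr_ge0 Pi_ge0 (ltW tf_gt0)) count.
rewrite sum_measure_occur // => markov.
rewrite -bin_ffact natrM mulrAC EFinM -lee_pdivrMr // muleAC -EFinM; exact: markov.
Qed.

Lemma next_clustering_tail (t : nat) (mu delta : R) :
  0 <= p -> 0 <= delta -> #|C|%:R * p <= mu -> 2 * t%:R <= mu * delta ->
  t%:R <= d ->
  (P [set x | (mu * (1 + delta) <= #|next_clustering C E x|%:R)%R]
    <= ((1 + delta / 2) ^- t)%:E)%E.
Proof.
move=> p_ge0 delta_ge0 Cp_mu t_mudelta td.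
have mu_ge0 : 0 <= mu by apply: le_trans Cp_mu; rewrite mulr_ge0.
have tb : t%:R <= mu * (1 + delta) by rewrite mulrDr mulr1; nra.
set Pi := \prod_(j < t) (mu * (1 + delta) - j%:R).
have Pi_gt0 : 0 < Pi.
  by apply: prodr_gt0 => j _; rewrite subr_gt0 (lt_le_trans _ tb) // ltr_nat.
have q_gt0 : 0 < 1 + delta / 2 by rewrite ltr_pwDl ?divr_ge0.
rewrite -(@lee_pmul2l _ Pi%:E) ?lte_fin //.
apply: le_trans (next_clustering_ge_ffact td tb) _.
rewrite lee_fin ler_pdivlMr ?exprn_gt0 //; exact: ffact_geometric_le.
Qed.

End bounded_independence_tail.

Section parameters.
Variable R : realType.

Lemma log2_double (x : R) : 0 < x -> log2 (2 * x) = 1 + log2 x.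
Proof.
move=> x_gt0; rewrite /log2 lnM ?posrE // mulrDl divff //.
by rewrite gt_eqF // ln_gt0 // ltr1n.
Qed.

Lemma log2_double_ge (n k : nat) : (0 < n)%N -> k%:R <= log2 (n%:R : R) / 2 ->
  (2 * k + 1)%:R <= log2 (2 * n%:R : R).
Proof. by move=> n_gt0; rewrite log2_double ?ltr0n // natrD natrM; lra. Qed.

Lemma alpha_recr (k i : nat) :
  alpha (R:=R) k i.+1 = alpha k i * (1 + (k - i.+1)%:R^-1).
Proof. by rewrite /alpha big_nat_recr. Qed.

Lemma alphaE (k i : nat) : (i < k)%N -> alpha (R:=R) k i = k%:R / (k - i)%:R.
Proof.
elim: i => [|i IH] ik.
  have k_neq0 : k%:R != 0 :> R by rewrite pnatr_eq0 -lt0n.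
  by rewrite /alpha big_geq // subn0 divff.
rewrite alpha_recr (IH (ltnW ik)) -(subnSK (ltnW ik)) -natr1.
set r : R := (k - i.+1)%:R.
have r_neq0 : r != 0 by rewrite pnatr_eq0 -lt0n subn_gt0.
have r1_neq0 : r + 1 != 0 by rewrite natr1 pnatr_eq0.
have -> : 1 + r^-1 = (r + 1) / r by rewrite mulrDl divff // mul1r addrC.
by rewrite mulrA divfK.
Qed.

Lemma bound_succ (n k i : nat) : (0 < n)%N ->
  bound (R:=R) n k i.+1
    = bound n k i * n%:R `^ (- k%:R^-1) * (1 + (k - i.+1)%:R^-1).
Proof.
move=> n_gt0; rewrite /bound alpha_recr.
have -> : 1 - i.+1%:R / k%:R = (1 - i%:R / k%:R) + - k%:R^-1 :> R.
  by rewrite -natr1 mulrDl; ring.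
by rewrite powRD; [ring | rewrite pnatr_eq0 -lt0n n_gt0 implybT].
Qed.

Lemma natr_le_powR (x : R) (k r : nat) : 0 < x -> (0 < k)%N ->
  k%:R <= log2 x -> r%:R <= x `^ (r%:R / k%:R).
Proof.
move=> x_gt0 k_gt0 k_log.
have y_ge2 : 2 <= x `^ k%:R^-1.
  rewrite -ler_ln ?posrE ?powR_gt0 // ln_powR ler_pdivlMl ?ltr0n //.
  by rewrite -ler_pdivlMr ?ln_gt0 ?ltr1n.
rewrite mulrC powRrM powR_mulrn ?powR_ge0 //.
apply: le_trans (lerXn2r _ _ _ y_ge2); rewrite ?nnegrE ?powR_ge0 //.
by rewrite -natrX ler_nat ltnW // ltn_expl.
Qed.

Lemma bound_margin (n k i : nat) : (0 < n)%N -> k%:R <= log2 (n%:R : R) / 2 ->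
  (i.+1 < k)%N ->
  2 * (2 * k + 1)%:R <= bound (R:=R) n k i * n%:R `^ (- k%:R^-1) / (k - i.+1)%:R.
Proof.
move=> n_gt0 k_log ik.
have k_gt0 : (0 < k)%N by apply: leq_ltn_trans ik.
have r_gt0 : (0 : R) < (k - i.+1)%:R by rewrite ltr0n subn_gt0.
have xi_ge : 2 * (2 * k + 1)%:R <= xi (R:=R) n.
  have e_ge1 : 1 <= expR (3^-1 : R) by rewrite -expR0 ler_expR invr_ge0.
  have L_ge := log2_double_ge n_gt0 k_log.
  apply: le_trans (ler_peMl _ e_ge1); first by rewrite ler_pM2l.
  by rewrite mulr_ge0 // (le_trans _ L_ge).
have alpha_ge1 : 1 <= alpha (R:=R) k i.
  have i_lt_k : (i < k)%N by apply: ltnW.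
  by rewrite alphaE // ler_pdivlMr ?mul1r ?ler_nat ?leq_subr // ltr0n subn_gt0.
have -> : bound (R:=R) n k i * n%:R `^ (- k%:R^-1)
    = xi n * alpha k i * n%:R `^ ((k - i.+1)%:R / k%:R).
  rewrite /bound -mulrA -powRD; last by rewrite pnatr_eq0 -lt0n n_gt0 implybT.
  congr (_ * _ `^ _); rewrite natrB ?(ltnW ik) // -natr1.
  by field; rewrite pnatr_eq0 -lt0n.
rewrite ler_pdivlMr //; apply: ler_pM.
- by rewrite mulr_ge0 // ltr0n.
- exact: ltW.
- apply: (le_trans xi_ge (ler_peMr _ alpha_ge1)).
  by apply: (le_trans _ xi_ge); rewrite mulr_ge0.
apply: natr_le_powR => //; first by rewrite ltr0n.
have : (0 : R) <= k%:R by rewrite ler0n.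
lra.
Qed.

Lemma xi_alpha_le (n k : nat) : (0 < n)%N -> (0 < k)%N ->
  k%:R <= log2 (n%:R : R) / 2 ->
  xi (R:=R) n * alpha k (k - 1) * n%:R `^ k%:R^-1
    <= 4 * expR 3^-1 * (k%:R * n%:R `^ k%:R^-1 * log2 n%:R).
Proof.
move=> n_gt0 k_gt0 k_log.
have k1_lt_k : (k - 1 < k)%N by lia.
rewrite alphaE // subKn // divr1.
have log_ge2 : 2 <= log2 (n%:R : R).
  have : (1 : R) <= k%:R by rewrite ler1n.
  lra.
rewrite /xi log2_double ?ltr0n //.
have : 0 <= expR 3^-1 * k%:R * n%:R `^ k%:R^-1 :> R.
  by rewrite !mulr_ge0 ?expR_ge0 ?powR_ge0.
nra.
Qed.

End parameters.

Theorem lemma8 (R : realType) :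
  (exists N : nat, forall n : nat, (N <= n)%N ->
    forall k : nat, (1 <= k)%N -> (k%:R <= log2 (n%:R : R) / 2) ->
    forall i : nat, (1 <= i)%N -> (i <= k - 1)%N ->
    forall (C : {set {set 'I_n}}), clustering C ->
    (#|C|%:R <= bound (R:=R) n k i.-1) ->
    forall (dT : measure_display) (T : measurableType dT) (P : probability T R)
           (E : {set 'I_n} -> set T),
      (forall A, A \in C -> measurable (E A)) ->
      (forall A, A \in C -> P (E A) = (n%:R `^ (- (k%:R)^-1))%:E) ->
      dwise_indep P C E (dpar n) ->
      (P [set x | (bound (R:=R) n k i <= #|next_clustering C E x|%:R)%R] < (2^-1)%:E)%E)
  /\
  (exists (c : R) (N : nat), 0 < c /\ forall n : nat, (N <= n)%N ->
    forall k : nat, (1 <= k)%N -> (k%:R <= log2 (n%:R : R) / 2) ->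
    xi (R:=R) n * alpha k (k - 1) * (n%:R `^ (k%:R)^-1)
      <= c * (k%:R * (n%:R `^ (k%:R)^-1) * log2 (n%:R))).
Proof.
split; last first.
  exists (4 * expR 3^-1), 1%N; split; first by rewrite mulr_gt0 ?expR_gt0.
  by move=> n n_gt0 k k_gt0 k_log; exact: xi_alpha_le.
exists 1%N => n n_gt0 k k_gt0 k_log [//|i] _ ik C _ C_le dT T P E mE PE indepE.
have {ik} ik : (i.+1 < k)%N by lia.
set p := n%:R `^ _ in PE *; set mu := bound n k i * p; set r := (k - i.+1)%N.
have r_gt0 : (0 : R) < r%:R by rewrite ltr0n subn_gt0.
have delta_ge0 : 0 <= r%:R^-1 :> R by rewrite invr_ge0 ltW.
have p_ge0 : 0 <= p by exact: powR_ge0.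
have t_d : (2 * k + 1)%:R <= dpar (R:=R) n.
  have := log2_double_ge n_gt0 k_log; have := ler0n R (2 * k + 1).
  rewrite /dpar; lra.
have q_gt2 : 2 < (1 + r%:R^-1 / 2 : R) ^+ (2 * k + 1).
  apply: (lt_le_trans _ (@ler_bernoulli R _ (2 * k + 1) (divr_ge0 delta_ge0 _))) => //.
  have : 2 < (2 * k + 1)%:R / r%:R :> R.
    by rewrite ltr_pdivlMr // -natrM ltr_nat; lia.
  lra.
rewrite bound_succ // -/mu.
have Cp_mu : #|C|%:R * p <= mu by rewrite ler_wpM2r.
have := next_clustering_tail mE PE indepE p_ge0 delta_ge0 Cp_mu
  (bound_margin n_gt0 k_log ik) t_d.
move=> /le_lt_trans; apply.
by rewrite lte_fin ltf_pV2 ?posrE ?exprn_gt0 // (lt_trans _ q_gt2).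
Qed.
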